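(* Assume $k\ge 2$, $\epsilon\in(0,1)$, $\delta\in(0,1)$, and $B\ge 108\,\frac{k}{\epsilon^3}\log k$. Let $\gamma=\frac{\epsilon^2}{36\log k}$. Run the pre-processing algorithm with per-color budget $B'=1/\gamma$ (assumed to be an integer), obtaining $T$; let $\tilde C=\{c\in C: f_c(T)<\mathrm{OPT}\}$ and $\tilde f_c(A)=f_c(A\cup T)$ for $c\in\tilde C$; then run Algorithm 2 with failure parameter $\delta$ on the functions $(\tilde f_c)_{c\in\tilde C}$ with budget $\tilde B=B-|T|$, obtaining $\tilde S$ (take $\tilde S=\emptyset$ if $\tilde C=\emptyset$). Then with probability at least $1-\delta$, \[ \min_{c\in C} f_c(T\cup\tilde S)\;\ge\;\left(1-\frac1e-\epsilon\right)\mathrm{OPT}, \] and $|T\cup\tilde S|\le B$.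
   Context: Setup: $V$ is a finite nonempty ground set, $C$ is a finite nonempty set of ''colors'', $k=|C|$. For each $c\in C$, $f_c\colon 2^V\to\mathbb{R}_{\ge 0}$ is monotone and submodular. $B$ is a positive integer (the budget). $f(T\mid S)=f(S\cup T)-f(S)$ and $f(v\mid S)=f(\{v\}\mid S)$. $\mathrm{OPT}=\max_{S\subseteq V,\,|S|\le B}\min_{c\in C} f_c(S)$. $\Delta_V$ is the probability simplex over $V$; $\log$ is the natural logarithm. Pre-processing algorithm (input: the $f_c$ and a per-color budget $B'$): set $T=\emptyset$; for each color $c\in C$, repeat $B'$ times: pick $v\in\arg\max_{v\in V} f_c(v\mid T)$ and set $T=T\cup\{v\}$. Output $T$. For a family of monotone submodular functions $(g_c)_{c\in D}$ on $V$ and budget $b$, $\mathrm{LP}(S)$ is: maximize $\xi$ subject to $\sum_{v\in V} x_v\,(b\, g_c(v\mid S)+g_c(S))\ge \xi$ for all $c\in D$, $x\in\Delta_V$. Algorithm 2 (input: $(g_c)_{c\in D}$, $b$, $\delta$): set $S_{\mathrm{best}}=\emptyset$; repeat, with independent randomness, $\lceil\log_2(2/\delta)\rceil$ times: $S^{(0)}=\emptyset$; for $i=1,\dots,b$: let $x^{(i)}$ be an optimal solution of $\mathrm{LP}(S^{(i-1)})$, sample $v^{(i)}\sim x^{(i)}$, $S^{(i)}=S^{(i-1)}\cup\{v^{(i)}\}$; if $\min_c g_c(S^{(b)})\ge\min_c g_c(S_{\mathrm{best}})$ set $S_{\mathrm{best}}=S^{(b)}$. Output $S_{\mathrm{best}}$.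 *)

From HB Require Import structures.
From mathcomp Require Import all_boot all_order all_algebra.
From mathcomp Require Import all_classical all_reals sequences exp.
Set Implicit Arguments. Unset Strict Implicit. Unset Printing Implicit Defensive.
Import Order.TTheory GRing.Theory Num.Theory.
Local Open Scope ring_scope.

Section Defs.
Variables (R : realType) (V C : finType).

Definition nonneg_fun (g : {set V} -> R) := forall A, 0 <= g A.
Definition monotone_fun (g : {set V} -> R) := forall A B : {set V}, A \subset B -> g A <= g B.
Definition submodular_fun (g : {set V} -> R) :=
  forall A B, g (A :|: B) + g (A :&: B) <= g A + g B.

Definition marg (g : {set V} -> R) (v : V) (S : {set V}) : R := g (v |: S) - g S.

(* minimum over a finite set of colours (0 if the set is empty) *)
Definition minover (D : {set C}) (h : C -> R) : R :=
  if [pick c in D] is Some c0 then \big[Num.min/h c0]_(c in D) h c else 0.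

(* OPT = max_{|S| <= B} min_c f_c(S)   (f nonnegative, S = finset.set0 is feasible) *)
Definition OPT (f : C -> {set V} -> R) (B : nat) : R :=
  \big[Num.max/0]_(S : {set V} | (#|S| <= B)%N) minover [set: C] (fun c => f c S).

(* Pre-processing algorithm, as a relation "T is a possible output".
   greedy_steps f c n T T' : n greedy steps for colour c, starting at T, end at T'. *)
Fixpoint greedy_steps (f : C -> {set V} -> R) (c : C) (n : nat) (T T' : {set V}) : Prop :=
  match n with
  | 0 => T' = T
  | n'.+1 => exists v, (forall w, marg (f c) w T <= marg (f c) v T) /\
                       greedy_steps f c n' (v |: T) T'
  end.

Fixpoint greedy_colors (f : C -> {set V} -> R) (B' : nat) (cs : seq C) (T T' : {set V}) : Prop :=
  match cs with
  | [::] => T' = T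
  | c :: cs' => exists T1, greedy_steps f c B' T T1 /\ greedy_colors f B' cs' T1 T'
  end.

Definition preprocess_output (f : C -> {set V} -> R) (B' : nat) (T : {set V}) : Prop :=
  exists cs : seq C, perm_eq cs (enum C) /\ greedy_colors f B' cs finset.set0 T.

Definition in_simplex (x : V -> R) := (forall v, 0 <= x v) /\ \sum_v x v = 1.

Definition LP_obj (g : C -> {set V} -> R) (D : {set C}) (b : nat) (S : {set V})
  (x : V -> R) : R :=
  minover D (fun c => \sum_v x v * (b%:R * marg (g c) v S + g c S)).

Definition LP_optimal (g : C -> {set V} -> R) (D : {set C}) (b : nat) (S : {set V})
  (x : V -> R) : Prop :=
  in_simplex x /\ forall y, in_simplex y -> LP_obj g D b S y <= LP_obj g D b S x.

(* Expectation of h(S^(n)) for one run of the inner loop of Algorithm 2, started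
   at S, where sel S is the (optimal LP) distribution used at current set S. *)
Fixpoint trial_exp (sel : {set V} -> V -> R) (n : nat) (S : {set V})
  (h : {set V} -> R) : R :=
  match n with
  | 0 => h S
  | n'.+1 => \sum_v sel S v * trial_exp sel n' (v |: S) h
  end.

(* Expectation of h(S_best) for r independent repetitions of the inner loop,
   starting with current best Sbest. *)
Fixpoint alg2_exp (g : C -> {set V} -> R) (D : {set C}) (b : nat)
  (sel : {set V} -> V -> R) (r : nat) (Sbest : {set V}) (h : {set V} -> R) : R :=
  match r with
  | 0 => h Sbest
  | r'.+1 => trial_exp sel b finset.set0 (fun S =>
      alg2_exp g D b sel r'
        (if minover D (fun c => g c Sbest) <= minover D (fun c => g c S) then S else Sbest) h)
  end.

Definition alg2_reps (delta : R) : nat := `|Num.ceil (ln (2 / delta) / ln 2)|%N.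

Definition alg2_prob (g : C -> {set V} -> R) (D : {set C}) (b : nat)
  (sel : {set V} -> V -> R) (delta : R) (P : {set V} -> bool) : R :=
  alg2_exp g D b sel (alg2_reps delta) finset.set0 (fun S => if P S then 1 else 0).

End Defs.

(* After preprocessing, every colour c either already reaches OPT on T, or
   (greedy choice plus diminishing returns) all its marginal gains above T are at
   most OPT / B'; moreover |T| <= k B' <= eps B / 3.  For a colour of the second
   kind, the uniform distribution on an optimal set shows that the LP distribution
   increases f_c(S) in expectation by at least (P - f_c(S)) / B~, where
   P = (1 - eps/3) OPT.  With increments bounded by OPT / B', this drift yields the
   exponential moment bound E[exp(mu (P - f_c(S_B~)))] <= exp(mu e^(-(1 - eps/3)) P),
   so by Markov's inequality f_c falls below (1 - 1/e - eps) OPT with probability at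
   most k^-6.  A union bound over the colours makes one run fail with probability at
   most 1/2, and ceil(log2(2/delta)) independent runs, keeping the best, fail with
   probability at most delta. *)

From HB Require Import structures.
From mathcomp Require Import all_boot all_order all_algebra.
From mathcomp Require Import all_classical all_reals sequences exp.
From mathcomp Require Import fintype finset ring lra zify.
Import Order.TTheory GRing.Theory Num.Theory.
Local Open Scope ring_scope.
Set Implicit Arguments. Unset Strict Implicit. Unset Printing Implicit Defensive.

Section SetFunction.
Variables (R : realType) (V : finType) (g : {set V} -> R).
Hypotheses (g_mono : monotone_fun g) (g_submod : submodular_fun g).

Lemma marg_ge0 v S : 0 <= marg g v S.
Proof. by rewrite /marg subr_ge0; apply: g_mono; exact: subsetUr. Qed.

Lemma marg_le_subset w (A B : {set V}) : A \subset B -> marg g w B <= marg g w A.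
Proof.
move=> AB; rewrite /marg.
have [wB|wB] := boolP (w \in B).
  by rewrite (setUidPr _) ?sub1set // subrr; exact: marg_ge0.
have := g_submod (w |: A) B.
rewrite -setUA (setUidPr AB) setIUl (setIidPl AB).
have -> : [set w] :&: B = set0.
  by apply/setP=> x; rewrite !inE; apply/andP=> -[/eqP ->]; rewrite (negbTE wB).
rewrite set0U; lra.
Qed.

Lemma setU_gain_le_sum_marg (A S : {set V}) :
  g (A :|: S) - g S <= \sum_(v in A) marg g v S.
Proof.
elim: {A}_.+1 {-2}A (ltnSn #|A|) => // n IH A.
have [->|[a aA]] := set_0Vmem A; first by rewrite set0U subrr big_set0.
rewrite (cardsD1 a A) aA ltnS => /IH.
have -> : A :|: S = a |: ((A :\ a) :|: S) by rewrite setUA (setD1K aA).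
rewrite (big_setD1 a aA) /=.
have := marg_le_subset a (subsetUr (A :\ a) S).
rewrite /marg; lra.
Qed.

End SetFunction.

Lemma monotone_fun_setUr (R : realType) (V : finType) (g : {set V} -> R) T :
  monotone_fun g -> monotone_fun (fun A => g (A :|: T)).
Proof. by move=> g_mono A B AB; apply: g_mono; exact: setSU. Qed.

Lemma submodular_fun_setUr (R : realType) (V : finType) (g : {set V} -> R) T :
  submodular_fun g -> submodular_fun (fun A => g (A :|: T)).
Proof.
move=> g_submod A B; have := g_submod (A :|: T) (B :|: T).
by rewrite setUACA setUid -setUIl.
Qed.

Section Minover.
Variables (R : realType) (C : finType) (D : {set C}) (h : C -> R).

Lemma minover_le c : c \in D -> minover D h <= h c.
Proof.
move=> cD; rewrite /minover; case: pickP => [c0 _|/(_ c)]; last by rewrite cD.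
by rewrite (bigD1 c cD) /= ge_min lexx.
Qed.

Lemma minover_ge a : D != set0 -> (forall c, c \in D -> a <= h c) -> a <= minover D h.
Proof.
move=> /set0Pn[c cD] le_ah; rewrite /minover; case: pickP => [c0 c0D|/(_ c)]; last by rewrite cD.
apply: (big_ind (fun x => a <= x)) => [|x y ax ay|]; [exact: le_ah | by rewrite le_min ax ay | exact: le_ah].
Qed.

End Minover.

Section Optimum.
Variables (R : realType) (V C : finType) (f : C -> {set V} -> R) (B : nat).

Lemma OPT_ge0 : 0 <= OPT f B.
Proof. by rewrite /OPT; elim/big_rec: _ => // S x _ x0; rewrite le_max x0 orbT. Qed.

Lemma OPT_attained : 0 < OPT f B ->
  exists2 S : {set V}, (#|S| <= B)%N & forall c, OPT f B <= f c S.
Proof.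
have : OPT f B = 0 \/ exists2 S : {set V}, (#|S| <= B)%N &
    OPT f B = minover [set: C] (fun c => f c S).
  rewrite /OPT; apply: (big_ind (fun x => x = 0 \/ exists2 S : {set V}, (#|S| <= B)%N &
    x = minover [set: C] (fun c => f c S))) => [|x y hx hy|S hS]; [by left| |by right; exists S].
  by have [] := leP x y.
case=> [->|[S SB ->] _]; first by rewrite ltxx.
by exists S => // c; apply: minover_le; rewrite inE.
Qed.

End Optimum.

Section Preprocessing.
Variables (R : realType) (V C : finType) (f : C -> {set V} -> R).
Hypotheses (f_ge0 : forall c, nonneg_fun (f c)) (f_mono : forall c, monotone_fun (f c))
  (f_submod : forall c, submodular_fun (f c)).

Lemma greedy_steps_subset c n T0 T1 :
  greedy_steps f c n T0 T1 -> T0 \subset T1 /\ (#|T1| <= #|T0| + n)%N.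
Proof.
elim: n T0 => [|n IH] T0 /=; first by move=> ->; rewrite addn0.
move=> [v [_ /IH[sub_T1 card_T1]]]; split.
  exact: subset_trans (subsetUr [set v] T0) sub_T1.
by move: card_T1; rewrite cardsU1; case: (v \in T0) => /=; lia.
Qed.

(* Diminishing returns: every greedy step gains at least [marg (f c) w S]. *)
Lemma greedy_steps_gain c n T0 T1 (S : {set V}) w : greedy_steps f c n T0 T1 -> T1 \subset S ->
  n%:R * marg (f c) w S <= f c T1 - f c T0.
Proof.
elim: n T0 => [|n IH] T0 /=; first by move=> -> _; rewrite mul0r subrr.
move=> [v [v_best steps]] T1S.
have [/(subset_trans (subsetUr [set v] T0)) T0T1 _] := greedy_steps_subset steps.
have := IH _ steps T1S.
have := marg_le_subset (f_mono c) (f_submod c) w (subset_trans T0T1 T1S).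
have := v_best w.
rewrite -natr1 mulrDl mul1r /marg; lra.
Qed.

Lemma greedy_colors_spec B' cs T0 T : greedy_colors f B' cs T0 T ->
  [/\ T0 \subset T, (#|T| <= #|T0| + size cs * B')%N &
      forall c, c \in cs -> forall (S : {set V}) w, T \subset S -> B'%:R * marg (f c) w S <= f c T].
Proof.
elim: cs T0 => [|c cs IH] T0 /=; first by move=> ->; split; rewrite ?addn0.
move=> [T1 [steps /IH[T1T card_T gain_T]]].
have [T0T1 card_T1] := greedy_steps_subset steps.
split; [exact: subset_trans T1T | lia |].
move=> c'; rewrite in_cons => /predU1P[-> S w TS|]; last exact: gain_T.
have := greedy_steps_gain w steps (subset_trans T1T TS).
have := f_ge0 c T0; have := f_mono c T1T; lra.
Qed.

Lemma preprocess_output_spec B' T : preprocess_output f B' T ->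
  (#|T| <= #|C| * B')%N /\
  forall c (S : {set V}) w, T \subset S -> B'%:R * marg (f c) w S <= f c T.
Proof.
move=> [cs [perm_cs /greedy_colors_spec[_ card_T gain_T]]].
split; first by rewrite cards0 (perm_size perm_cs) -cardE in card_T.
by move=> c; apply: gain_T; rewrite (perm_mem perm_cs) mem_enum.
Qed.

End Preprocessing.

Section TrialExpectation.
Variables (R : realType) (V : finType) (sel : {set V} -> V -> R).
Hypothesis sel_simplex : forall S, in_simplex (sel S).

Lemma sel_ge0 S v : 0 <= sel S v. Proof. by case: (sel_simplex S). Qed.
Lemma sum_sel S : \sum_v sel S v = 1. Proof. by case: (sel_simplex S). Qed.

Lemma trial_exp_affine n S a b h :
  trial_exp sel n S (fun X => a + b * h X) = a + b * trial_exp sel n S h.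
Proof.
elim: n S => [|n IH] S //=; under eq_bigr do rewrite IH mulrDr mulrCA.
by rewrite big_split /= -mulr_suml sum_sel mul1r -mulr_sumr.
Qed.

Lemma trial_exp_const n S a : trial_exp sel n S (fun _ => a) = a.
Proof. by have := trial_exp_affine n S a 0 (fun _ => 0); rewrite !mul0r !addr0. Qed.

Lemma trial_exp_scale n S a h :
  trial_exp sel n S (fun X => a * h X) = a * trial_exp sel n S h.
Proof.
rewrite -[RHS]add0r -trial_exp_affine; congr trial_exp.
by apply/funext => X; rewrite add0r.
Qed.

Lemma trial_exp_sum (I : finType) (D : {set I}) n S (h : I -> {set V} -> R) :
  trial_exp sel n S (fun X => \sum_(c in D) h c X) = \sum_(c in D) trial_exp sel n S (h c).
Proof.
elim: n S => [|n IH] S //=; under eq_bigr do rewrite IH mulr_sumr.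
by rewrite exchange_big.
Qed.

(* Only the sets reachable in [n] steps, hence of size at most [#|S| + n], matter. *)
Lemma ler_trial_exp n (S : {set V}) (h1 h2 : {set V} -> R) :
  (forall X : {set V}, (#|X| <= #|S| + n)%N -> h1 X <= h2 X) ->
  trial_exp sel n S h1 <= trial_exp sel n S h2.
Proof.
elim: n S => [|n IH] S /= le_h; first by apply: le_h; rewrite addn0.
apply: ler_sum => v _; apply: ler_wpM2l; first exact: sel_ge0.
apply: IH => X card_X; apply: le_h; move: card_X; rewrite cardsU1.
by case: (v \in S) => /=; lia.
Qed.

(* Union bound combined with Markov's inequality for the exponential moments. *)
Lemma trial_exp_fail_le (C : finType) (D : {set C}) (g : C -> {set V} -> R) thr mu n S :
  D != set0 -> 0 <= mu ->
  trial_exp sel n S (fun X => if thr <= minover D (fun c => g c X) then 0 else 1)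
  <= \sum_(c in D) trial_exp sel n S (fun X => expR (mu * (thr - g c X))).
Proof.
move=> D0 mu0; rewrite -trial_exp_sum; apply: ler_trial_exp => X _.
case: ifPn => [_|fail]; first by apply: sumr_ge0 => c _; exact: expR_ge0.
have /forall_inPn[c cD] : ~~ [forall c in D, thr <= g c X].
  by apply: contra fail => /forall_inP; exact: minover_ge.
rewrite -ltNge => gc_lt; rewrite (bigD1 c cD) /=.
have : 1 <= expR (mu * (thr - g c X)).
  by apply: le_trans (expR_ge1Dx _); rewrite lerDl; apply: mulr_ge0; lra.
have : 0 <= \sum_(i in D | i != c) expR (mu * (thr - g i X)).
  by apply: sumr_ge0 => i _; exact: expR_ge0.
lra.
Qed.

End TrialExpectation.

Section ExpInequalities.
Variable R : realType.

Lemma expRN_le_quad (y : R) : 0 <= y -> expR (- y) <= 1 - y + y ^+ 2.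
Proof.
move=> y0; set w := 1 + y / 2.
have sq_w_le : w * w <= expR y.
  have -> : expR y = expR (y / 2) * expR (y / 2) by rewrite -expRD; congr expR; lra.
  by apply: ler_pM; rewrite /w ?expR_ge1Dx //; lra.
rewrite expRN -div1r ler_pdivrMr ?expR_gt0 //.
have q0 : 0 <= 1 - y + y ^+ 2 by rewrite expr2; nra.
apply: le_trans (ler_wpM2l q0 sq_w_le); rewrite /w expr2.
have y3 : 0 <= y * y * y by rewrite !mulr_ge0.
have y4 : 0 <= y * y * y * y by rewrite !mulr_ge0.
nra.
Qed.

Lemma expR_Nmul_le (lam x M : R) : 0 <= lam -> 0 <= x <= M ->
  expR (- (lam * x)) <= 1 - lam * (1 - lam * M) * x.
Proof.
move=> lam0 /andP[x0 xM]; apply: le_trans (expRN_le_quad (mulr_ge0 lam0 x0)) _.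
have : 0 <= lam * lam * x * (M - x) by rewrite !mulr_ge0 // subr_ge0.
rewrite expr2; nra.
Qed.

Lemma expR_le1D2x (x : R) : 0 <= x <= 1 / 2 -> expR x <= 1 + 2 * x.
Proof.
move=> /andP[x0 x_le].
have : expR x * (1 - x) <= 1.
  rewrite -[X in _ <= X](expRxMexpNx_1 x); apply: ler_wpM2l; first exact: expR_ge0.
  by have := expR_ge1Dx (- x); lra.
have : 0 <= x * (1 - 2 * x) by apply: mulr_ge0; lra.
have : 0 < 1 - x by lra.
nra.
Qed.

Lemma expr1Bdiv_le_expRN (a : R) n : (0 < n)%N -> 0 <= 1 - a / n%:R ->
  (1 - a / n%:R) ^+ n <= expR (- a).
Proof.
move=> n0 base0.
have -> : expR (- a) = expR (- (a / n%:R)) ^+ n.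
  by rewrite -expRM_natl; congr expR; field; rewrite pnatr_eq0 -lt0n.
apply: lerXn2r; rewrite ?nnegrE ?expR_ge0 //.
by have := expR_ge1Dx (- (a / n%:R)); lra.
Qed.

Lemma natr_expRN_ln_le (k : nat) : (2 <= k)%N -> k%:R * expR (- (6 * ln (k%:R : R))) <= 1 / 2.
Proof.
move=> k2; have k_ge2 : (2 : R) <= k%:R by rewrite ler_nat.
have ln2_le : ln (2 : R) <= ln (k%:R : R) by rewrite ler_ln ?posrE //; lra.
have ln2_gt0 : 0 < ln (2 : R) by apply: ln_gt0; lra.
have : expR (- (6 * ln (k%:R : R))) <= expR (- ln (k%:R : R)) * expR (- ln 2).
  by rewrite -expRD ler_expR; lra.
rewrite !expRN !lnK ?posrE; [|lra|lra].
rewrite -(ler_pM2l (_ : 0 < k%:R)); last lra.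
by rewrite mulrA mulfV ?mul1r ?div1r // pnatr_eq0 -lt0n (leq_trans _ k2).
Qed.

Lemma expr_half_alg2_reps_le (delta : R) : 0 < delta < 1 ->
  (1 / 2) ^+ alg2_reps delta <= delta.
Proof.
move=> /andP[d0 d1]; set r := alg2_reps delta.
have ln2_gt0 : 0 < ln (2 : R) by apply: ln_gt0; lra.
have lnd_gt0 : 0 < ln (2 / delta) by apply: ln_gt0; rewrite ltr_pdivlMr //; lra.
have r_ge : ln (2 / delta) / ln 2 <= r%:R.
  rewrite /r /alg2_reps natr_absz ger0_norm ?ceil_ge // ceil_ge0.
  by apply: (@lt_trans _ _ 0); [lra | exact: divr_gt0].
have : 2 / delta <= 2 ^+ r.
  have -> : (2 : R) ^+ r = expR (r%:R * ln 2) by rewrite expRM_natl lnK // posrE.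
  rewrite -{1}(@lnK _ (2 / delta)) ?posrE ?divr_gt0 // ler_expR.
  by rewrite -ler_pdivrMr.
have two_r_gt0 : (0 : R) < 2 ^+ r by rewrite exprn_gt0.
rewrite expr_div_n expr1n !ler_pdivrMr // => le_2r.
by rewrite mulrC; apply: le_trans le_2r; rewrite ler1n.
Qed.

Lemma eps_gap_ge (eps : R) : 0 < eps < 1 ->
  eps / 2 <= (1 - eps / 3) * (1 - expR (- (1 - eps / 3))) - (1 - 1 / expR 1 - eps).
Proof.
move=> /andP[e0 e1]; set t := eps / 3; set A := 1 / expR 1.
have t0 : 0 <= t by rewrite /t; lra.
have t_le : t <= 1 / 3 by rewrite /t; lra.
have A_le : A <= 1 / 2.
  rewrite /A ler_pdivrMr ?expR_gt0 //; have := expR_ge1Dx (1 : R); lra.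
have A0 : 0 <= A by rewrite /A divr_ge0 ?expR_ge0.
have exp_le : expR (- (1 - t)) <= A * (1 + 2 * t).
  rewrite (_ : - (1 - t) = - 1 + t); last by ring.
  rewrite expRD /A div1r -expRN; apply: ler_wpM2l; first exact: expR_ge0.
  by apply: expR_le1D2x; lra.
have : (1 - t) * expR (- (1 - t)) <= (1 - t) * (A * (1 + 2 * t)).
  by apply: ler_wpM2l => //; lra.
have : A * t <= 1 / 2 * t by apply: ler_wpM2r.
have : 0 <= A * t * t by apply: mulr_ge0 => //; exact: mulr_ge0.
rewrite /t; nra.
Qed.

End ExpInequalities.

Section Concentration.
Variables (R : realType) (V : finType) (sel : {set V} -> V -> R) (g : {set V} -> R).
Variables (b : nat) (P M : R).
Hypotheses (sel_simplex : forall S, in_simplex (sel S)) (b_gt0 : (0 < b)%N) (M_ge0 : 0 <= M).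
Hypothesis marg_bounded : forall S v, 0 <= marg g v S <= M.
Hypothesis drift : forall S, P - g S <= b%:R * \sum_v sel S v * marg g v S.

Definition step_factor (lam : R) := 1 - (1 - lam * M) / b%:R.

Let b_gt0R : 0 < b%:R :> R. Proof. by rewrite ltr0n. Qed.

(* [expR (- y) <= 1 - y + y^2] on each increment, then the drift hypothesis. *)
Lemma expR_step_le lam S : 0 <= lam -> lam * M <= 1 ->
  \sum_v sel S v * expR (lam * (P - g (v |: S))) <= expR (lam * step_factor lam * (P - g S)).
Proof.
move=> lam0 lamM.
set z := P - g S; set kap := lam * (1 - lam * M); set E := \sum_v sel S v * marg g v S.
have kap0 : 0 <= kap by apply: mulr_ge0; lra.
have step_le v : expR (lam * (P - g (v |: S))) <= expR (lam * z) * (1 - kap * marg g v S).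
  rewrite (_ : lam * _ = lam * z + - (lam * marg g v S)); last by rewrite /z /marg; ring.
  by rewrite expRD ler_wpM2l ?expR_ge0 // expR_Nmul_le.
have avg_le : \sum_v sel S v * expR (lam * (P - g (v |: S))) <= expR (lam * z) * (1 - kap * E).
  apply: le_trans (ler_sum _ (fun v _ => ler_wpM2l (sel_ge0 sel_simplex S v) (step_le v))) _.
  rewrite (_ : \sum_v _ = \sum_v (expR (lam * z) * sel S v - expR (lam * z) * kap * (sel S v * marg g v S))).
    by rewrite sumrB -!mulr_sumr sum_sel // -/E; lra.
  by apply: eq_bigr => v _; ring.
apply: le_trans avg_le _.
rewrite (_ : lam * _ * z = lam * z + - (kap * (z / b%:R))); last first.
  by rewrite /step_factor /kap; field; rewrite pnatr_eq0 -lt0n.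
rewrite expRD ler_wpM2l ?expR_ge0 //; apply: le_trans (expR_ge1Dx _).
have : z / b%:R <= E by rewrite ler_pdivrMr // mulrC; exact: drift.
by rewrite lerD2l lerN2; apply: ler_wpM2l.
Qed.

(* The exponent of the moment bound after [n] steps. *)
Fixpoint drift_exponent (mu : R) (n : nat) : R :=
  if n is n'.+1 then drift_exponent mu n' * step_factor (drift_exponent mu n') else mu.

Lemma step_factor_ge0_le lam mu : 0 <= lam -> lam <= mu -> mu * M <= 1 ->
  0 <= step_factor lam <= step_factor mu.
Proof.
move=> lam0 lam_mu muM.
have lamM : lam * M <= mu * M by apply: ler_wpM2r.
have lamM0 : 0 <= lam * M by apply: mulr_ge0.
have : (1 - mu * M) / b%:R <= (1 - lam * M) / b%:R.
  by apply: ler_wpM2r; rewrite ?invr_ge0 //; lra.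
have : (1 - lam * M) / b%:R <= 1.
  rewrite ler_pdivrMr // mul1r; have : (1 : R) <= b%:R by rewrite ler1n.
  lra.
rewrite /step_factor; lra.
Qed.

Lemma step_factor_le1 lam : lam * M <= 1 -> step_factor lam <= 1.
Proof. by move=> lamM; rewrite lerBlDr lerDl divr_ge0 // subr_ge0. Qed.

Lemma drift_exponent_bounds mu n : 0 <= mu -> mu * M <= 1 ->
  0 <= drift_exponent mu n <= mu * step_factor mu ^+ n.
Proof.
move=> mu0 muM; have /andP[q0 q_le] := step_factor_ge0_le mu0 (lexx mu) muM.
elim: n => [|n /andP[l0 l_le]] /=; first by rewrite expr0 mulr1 mu0 lexx.
have l_mu : drift_exponent mu n <= mu.
  by apply: le_trans l_le _; rewrite ler_piMr // exprn_ile1 // step_factor_le1.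
have /andP[ql0 ql_le] := step_factor_ge0_le l0 l_mu muM.
by rewrite mulr_ge0 //= exprSr mulrA ler_pM.
Qed.

Lemma drift_exponent_le mu n : 0 <= mu -> mu * M <= 1 -> drift_exponent mu n <= mu.
Proof.
move=> mu0 muM; have /andP[_ le_mu] := drift_exponent_bounds n mu0 muM.
have /andP[q0 _] := step_factor_ge0_le mu0 (lexx mu) muM.
by apply: le_trans le_mu _; rewrite ler_piMr // exprn_ile1 // step_factor_le1.
Qed.

Lemma trial_exp_expR_le mu n S : 0 <= mu -> mu * M <= 1 ->
  trial_exp sel n S (fun X => expR (mu * (P - g X))) <= expR (drift_exponent mu n * (P - g S)).
Proof.
move=> mu0 muM; elim: n S => [|n IH] S //=.
have /andP[l0 _] := drift_exponent_bounds n mu0 muM.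
have lM : drift_exponent mu n * M <= 1.
  by apply: (le_trans _ muM); rewrite ler_wpM2r // drift_exponent_le.
apply: le_trans (expR_step_le S l0 lM).
by apply: ler_sum => v _; rewrite ler_wpM2l ?sel_ge0.
Qed.

Lemma trial_exp_expR_gap_le mu : 0 <= mu -> mu * M <= 1 -> 0 <= P -> 0 <= g set0 ->
  trial_exp sel b set0 (fun X => expR (mu * (P - g X))) <= expR (mu * expR (- (1 - mu * M)) * P).
Proof.
move=> mu0 muM P0 g0; apply: le_trans (trial_exp_expR_le b set0 mu0 muM) _.
rewrite ler_expR; have /andP[L0 L_le] := drift_exponent_bounds b mu0 muM.
have /andP[q0 _] := step_factor_ge0_le mu0 (lexx mu) muM.
apply: (@le_trans _ _ (drift_exponent mu b * P)); first by rewrite ler_wpM2l // gerBl.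
apply: ler_wpM2r => //; apply: le_trans L_le _.
by rewrite ler_wpM2l // expr1Bdiv_le_expRN.
Qed.

End Concentration.

Section Repetition.
Variables (R : realType) (V C : finType) (g : C -> {set V} -> R) (D : {set C}) (b : nat).
Variables (sel : {set V} -> V -> R) (thr : R) (good : {set V} -> bool).
Hypothesis sel_simplex : forall S, in_simplex (sel S).
Let value S := minover D (fun c => g c S).
Hypothesis good_threshold : forall S : {set V}, (#|S| <= b)%N -> good S = (thr <= value S).
Hypothesis trial_fail_le_half :
  trial_exp sel b set0 (fun S => if thr <= value S then 0 else 1) <= 1 / 2.

Let indicator S : R := if good S then 1 else 0.

Lemma good_best (Sb S : {set V}) : (#|Sb| <= b)%N -> (#|S| <= b)%N ->
  good Sb || (thr <= value S) -> good (if value Sb <= value S then S else Sb).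
Proof.
move=> Sb_le S_le; case: (leP (value Sb) (value S)) => [le_val|lt_val]; rewrite !good_threshold //.
  by case/orP => // /le_trans; apply.
by case/orP => // /le_trans; apply; apply: ltW.
Qed.

Lemma alg2_exp_good_ge1 r (Sb : {set V}) : (#|Sb| <= b)%N -> good Sb ->
  1 <= alg2_exp g D b sel r Sb indicator.
Proof.
elim: r Sb => [|r IH] Sb Sb_le good_Sb /=; first by rewrite /indicator good_Sb.
rewrite -(trial_exp_const sel_simplex b set0 1); apply: (ler_trial_exp sel_simplex) => S.
rewrite cards0 add0n => S_le; apply: IH; first by case: ifP.
by apply: good_best; rewrite ?good_Sb.
Qed.

(* A repetition fails only if the current best is bad and the new trial fails too. *)
Lemma alg2_exp_ge r (Sb : {set V}) : (#|Sb| <= b)%N ->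
  1 - (1 / 2) ^+ r <= alg2_exp g D b sel r Sb indicator.
Proof.
elim: r Sb => [|r IH] Sb Sb_le /=; first by rewrite expr0 subrr /indicator; case: good.
apply: (@le_trans _ _ (trial_exp sel b set0
   (fun S => 1 + - (1 / 2) ^+ r * (if thr <= value S then 0 else 1)))).
  rewrite trial_exp_affine // exprSr.
  have : 0 <= (1 / 2 : R) ^+ r by apply: exprn_ge0; lra.
  by move: trial_fail_le_half; nra.
apply: (ler_trial_exp sel_simplex) => S; rewrite cards0 add0n => S_le.
case: ifPn => [thr_le|_]; last by rewrite mulr1; apply: IH; case: ifP.
rewrite mulr0 addr0; apply: alg2_exp_good_ge1; first by case: ifP.
by apply: good_best; rewrite ?thr_le ?orbT.
Qed.

Lemma alg2_prob_ge delta : 0 < delta < 1 -> 1 - delta <= alg2_prob g D b sel delta good.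
Proof.
move=> delta01; apply: le_trans (alg2_exp_ge _ _); last by rewrite cards0.
by rewrite lerD2l lerN2 expr_half_alg2_reps_le.
Qed.

End Repetition.

Definition uniform_on {R : realType} {V : finType} (A : {set V}) : V -> R :=
  fun v => if v \in A then #|A|%:R^-1 else 0.

Lemma sum_uniform_on (R : realType) (V : finType) (A : {set V}) (h : V -> R) :
  \sum_v uniform_on A v * h v = #|A|%:R^-1 * \sum_(v in A) h v.
Proof.
rewrite mulr_sumr [RHS]big_mkcond; apply: eq_bigr => v _.
by rewrite /uniform_on; case: ifP; rewrite ?mul0r.
Qed.

Lemma uniform_on_simplex {R : realType} {V : finType} (A : {set V}) :
  A != set0 -> in_simplex (uniform_on A : V -> R).
Proof.
move=> A0; split=> [v|]; first by rewrite /uniform_on; case: ifP; rewrite ?invr_ge0.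
have := sum_uniform_on A (fun _ => 1 : R); under eq_bigr do rewrite mulr1.
by move=> ->; rewrite sumr_const -mulr_natr mul1r mulVf // pnatr_eq0 cards_eq0.
Qed.

Section LPDrift.
Variables (R : realType) (V C : finType) (g : C -> {set V} -> R) (D : {set C}) (b B : nat).
Hypotheses (g_ge0 : forall c, nonneg_fun (g c)) (g_mono : forall c, monotone_fun (g c))
  (g_submod : forall c, submodular_fun (g c)).
Variables (A : {set V}) (opt : R).
Hypotheses (A_neq0 : A != set0) (card_A_le : (#|A| <= B)%N) (b_le : (b <= B)%N).
Hypothesis opt_le : forall c, opt <= g c A.

Lemma LP_sum_split x S c : in_simplex x ->
  \sum_v x v * (b%:R * marg (g c) v S + g c S) = b%:R * \sum_v x v * marg (g c) v S + g c S.
Proof.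
move=> [_ sum_x].
rewrite (eq_bigr (fun v => b%:R * (x v * marg (g c) v S) + g c S * x v)); last by move=> v _; ring.
by rewrite big_split /= -!mulr_sumr sum_x mulr1.
Qed.

(* The uniform distribution on a feasible set witnesses the value of the LP. *)
Lemma LP_obj_uniform_ge S : D != set0 -> b%:R / B%:R * opt <= LP_obj g D b S (uniform_on A).
Proof.
move=> D0; apply: minover_ge => // c _.
rewrite LP_sum_split ?sum_uniform_on; last exact: uniform_on_simplex.
set h := g c S; set G := g c (A :|: S).
have s_gt0 : (0 : R) < #|A|%:R by rewrite ltr0n card_gt0.
have s_le : (#|A|%:R : R) <= B%:R by rewrite ler_nat.
have b_leR : (b%:R : R) <= B%:R by rewrite ler_nat.
have hG : h <= G by apply: g_mono; exact: subsetUr.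
have optG : opt <= G by apply: le_trans (opt_le c) _; apply: g_mono; exact: subsetUl.
have h0 : 0 <= h := g_ge0 c S.
have r0 : 0 <= b%:R / B%:R :> R by apply: divr_ge0.
have r1 : b%:R / B%:R <= 1 :> R by rewrite ler_pdivrMr ?mul1r //; lra.
have gain := setU_gain_le_sum_marg (g_mono c) (g_submod c) A S; rewrite -/h -/G in gain.
have : b%:R / B%:R * (G - h) <= b%:R / #|A|%:R * (G - h).
  by apply: ler_wpM2r; [lra | rewrite ler_wpM2l // lef_pV2 ?posrE //; lra].
have : b%:R / #|A|%:R * (G - h) <= b%:R * (#|A|%:R^-1 * \sum_(v in A) marg (g c) v S).
  by rewrite mulrA; apply: ler_wpM2l => //; rewrite divr_ge0.
have : b%:R / B%:R * opt <= b%:R / B%:R * G by apply: ler_wpM2l.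
have : b%:R / B%:R * h <= h by rewrite ler_piMl.
lra.
Qed.

Lemma LP_optimal_drift S x c : LP_optimal g D b S x -> c \in D ->
  b%:R / B%:R * opt - g c S <= b%:R * \sum_v x v * marg (g c) v S.
Proof.
move=> [x_simplex x_opt] cD.
have D0 : D != set0 by apply/set0Pn; exists c.
have := le_trans (LP_obj_uniform_ge S D0) (x_opt _ (uniform_on_simplex A_neq0)).
move/le_trans/(_ (minover_le _ cD)); rewrite LP_sum_split //; lra.
Qed.

End LPDrift.

Section MainArgument.
Variables (R : realType) (V C : finType) (f : C -> {set V} -> R) (B B' : nat) (eps : R).
Hypotheses (f_ge0 : forall c, nonneg_fun (f c)) (f_mono : forall c, monotone_fun (f c))
  (f_submod : forall c, submodular_fun (f c)).
Hypotheses (k_ge2 : (2 <= #|C|)%N) (eps01 : 0 < eps < 1).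
Hypothesis B_ge : 108 * #|C|%:R / eps ^+ 3 * ln (#|C|%:R : R) <= B%:R.
Hypothesis B'_def : B'%:R = 1 / (eps ^+ 2 / (36 * ln (#|C|%:R : R))).
Variable T : {set V}.
Hypothesis T_pre : preprocess_output f B' T.

Let lnk := ln (#|C|%:R : R).
Let O := OPT f B.
Let thr := (1 - 1 / expR 1 - eps) * O.
Let Ct := [set c | f c T < O].
Let ft c (A : {set V}) := f c (A :|: T).
Let Bt := (B - #|T|)%N.

Let eps_gt0 : 0 < eps. Proof. by case/andP: eps01. Qed.
Let eps_lt1 : eps < 1. Proof. by case/andP: eps01. Qed.

Let lnk_gt0 : 0 < lnk.
Proof. by apply: ln_gt0; rewrite ltr1n. Qed.

Let B'_eq : B'%:R = 36 * lnk / eps ^+ 2 :> R.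
Proof. by rewrite B'_def /lnk; field; rewrite ?expf_neq0 ?gt_eqF. Qed.

Let B'_gt0 : (0 : R) < B'%:R.
Proof. by rewrite B'_eq divr_gt0 ?exprn_gt0 // mulr_gt0. Qed.

Let card_T_le : (#|T|%:R : R) <= eps / 3 * B%:R.
Proof.
have [card_T _] := preprocess_output_spec f_ge0 f_mono f_submod T_pre.
apply: le_trans (_ : #|C|%:R * B'%:R <= _); first by rewrite -natrM ler_nat.
have -> : #|C|%:R * B'%:R = eps / 3 * (108 * #|C|%:R / eps ^+ 3 * lnk).
  by rewrite B'_eq [eps ^+ 3]exprS; field; rewrite ?expf_neq0 ?gt_eqF.
by apply: ler_wpM2l B_ge; rewrite divr_ge0 ?ltW.
Qed.

Let B_gt0 : (0 : R) < B%:R.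
Proof.
apply: lt_le_trans B_ge; rewrite !mulr_gt0 ?invr_gt0 ?exprn_gt0 //.
by rewrite ltr0n (leq_trans _ k_ge2).
Qed.

Let card_T_le_B : (#|T| <= B)%N.
Proof.
rewrite -(ler_nat R); apply: le_trans card_T_le _.
by rewrite ler_piMl ?ltW //; have := eps_lt1; lra.
Qed.

Let Bt_eq : Bt%:R = B%:R - #|T|%:R :> R.
Proof. by rewrite natrB. Qed.

Let thr_le_O : thr <= O.
Proof.
rewrite /thr ler_piMl ?OPT_ge0 //.
have : 0 <= 1 / expR 1 :> R by rewrite divr_ge0 ?expR_ge0.
have := eps_gt0; lra.
Qed.

Lemma good_set0 : Ct = set0 ->
  ((1 - 1 / expR 1 - eps) * OPT f B <= minover [set: C] (fun c => f c (T :|: set0)))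
  && (#|T :|: set0| <= B)%N.
Proof.
move=> Ct0; rewrite setU0 card_T_le_B andbT.
apply: minover_ge => [|c _]; first by rewrite -cards_eq0 cardsT -lt0n (leq_trans _ k_ge2).
apply: le_trans thr_le_O _; rewrite leNgt.
by apply/negP => fcT; move/setP/(_ c): Ct0; rewrite /Ct !inE fcT.
Qed.

Section NonemptyCt.
Hypothesis Ct_neq0 : Ct != set0.

Lemma good_threshold (S : {set V}) : (#|S| <= Bt)%N ->
  ((1 - 1 / expR 1 - eps) * OPT f B <= minover [set: C] (fun c => f c (T :|: S)))
  && (#|T :|: S| <= B)%N = (thr <= minover Ct (fun c => ft c S)).
Proof.
move=> card_S; have -> : (#|T :|: S| <= B)%N by have := cardsUI T S; lia.
rewrite andbT; apply/idP/idP => thr_le.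
  apply: minover_ge => // c _; rewrite /ft setUC; apply: le_trans thr_le _.
  by apply: minover_le; rewrite inE.
apply: minover_ge => [|c _]; first by rewrite -cards_eq0 cardsT -lt0n (leq_trans _ k_ge2).
have [cCt|cNCt] := boolP (c \in Ct).
  by rewrite setUC; apply: le_trans thr_le (minover_le _ cCt).
apply: le_trans thr_le_O _; apply: le_trans (f_mono c (subsetUl T S)).
by move: cNCt; rewrite /Ct inE -leNgt.
Qed.

Variable sel : {set V} -> V -> R.
Hypothesis sel_opt : forall S, LP_optimal ft Ct Bt S (sel S).

Let sel_simplex S : in_simplex (sel S). Proof. by case: (sel_opt S). Qed.

Let O_gt0 : 0 < O.
Proof.
have /set0Pn[c] := Ct_neq0; rewrite /Ct inE => fcT.
by apply: le_lt_trans fcT; exact: f_ge0.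
Qed.

Let Bt_gt0 : (0 < Bt)%N.
Proof.
rewrite -(ltr0n R) Bt_eq subr_gt0; apply: le_lt_trans card_T_le _.
by rewrite gtr_pMl //; have := eps_lt1; lra.
Qed.

Lemma marg_ft_bounded c : c \in Ct -> forall S v, 0 <= marg (ft c) v S <= O / B'%:R.
Proof.
rewrite /Ct inE => fcT S v; have [_ gain_T] := preprocess_output_spec f_ge0 f_mono f_submod T_pre.
have := gain_T c (S :|: T) v (subsetUr S T).
rewrite ler_pdivlMr // mulrC /marg /ft -setUA => gain.
rewrite subr_ge0 f_mono ?subsetUr //=; lra.
Qed.

Lemma ft_drift c : c \in Ct -> forall S,
  (1 - eps / 3) * O - ft c S <= Bt%:R * \sum_v sel S v * marg (ft c) v S.
Proof.
move=> cCt S; have [Sopt card_Sopt Sopt_ge] := OPT_attained O_gt0.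
have Sopt_neq0 : Sopt != set0.
  apply/negP => /eqP Sopt0; move: cCt; rewrite /Ct inE /O.
  have := Sopt_ge c; have := f_mono c (sub0set T); rewrite Sopt0; lra.
have opt_le c' : O <= ft c' Sopt.
  by apply: le_trans (Sopt_ge c') _; apply: f_mono; exact: subsetUl.
have := LP_optimal_drift (g := ft) (fun c A => f_ge0 c (A :|: T)) (fun c => monotone_fun_setUr T (f_mono c))
  (fun c => submodular_fun_setUr T (f_submod c)) Sopt_neq0 card_Sopt (leq_subr _ _) opt_le (sel_opt S) cCt.
apply: le_trans; rewrite lerD2r ler_wpM2r ?OPT_ge0 // -/Bt Bt_eq ler_pdivlMr //.
by have := card_T_le; lra.
Qed.

Let mu := eps / 3 * B'%:R / O.

Let mu_ge0 : 0 <= mu.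
Proof.
apply: divr_ge0; last exact: ltW O_gt0.
by rewrite mulr_ge0 // divr_ge0 // ltW.
Qed.

(* Markov's inequality applied to the moment bound for one colour. *)
Lemma trial_fail_color_le c : c \in Ct ->
  trial_exp sel Bt set0 (fun X => expR (mu * (thr - ft c X))) <= expR (- (6 * lnk)).
Proof.
move=> cCt; set P := (1 - eps / 3) * O; set M := O / B'%:R.
have muM : mu * M = eps / 3 by rewrite /mu /M; field; rewrite !gt_eqF.
have muO : mu * O = 12 * lnk / eps by rewrite /mu B'_eq; field; rewrite !gt_eqF.
rewrite (_ : (fun X => expR (mu * (thr - ft c X))) = fun X => expR (mu * (thr - P)) * expR (mu * (P - ft c X))); last first.
  by apply/funext => X; rewrite -expRD; congr expR; ring.
rewrite trial_exp_scale //.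
have M0 : 0 <= M by rewrite divr_ge0 ?ltW.
have := trial_exp_expR_gap_le sel_simplex Bt_gt0 M0 (marg_ft_bounded cCt) (ft_drift cCt) mu_ge0.
have P0 : 0 <= P by rewrite mulr_ge0 ?OPT_ge0 //; have := eps_lt1; lra.
have muM1 : mu * M <= 1 by rewrite muM; have := eps_lt1; lra.
move=> /(_ muM1 P0 (f_ge0 c _)) moment.
apply: le_trans (ler_wpM2l (expR_ge0 _) moment) _.
rewrite -expRD ler_expR muM.
have -> : mu * (thr - P) + mu * expR (- (1 - eps / 3)) * P
    = - (mu * O) * ((1 - eps / 3) * (1 - expR (- (1 - eps / 3))) - (1 - 1 / expR 1 - eps)).
  by rewrite /thr /P; ring.
rewrite muO mulNr lerN2.
have -> : 6 * lnk = 12 * lnk / eps * (eps / 2) by field; rewrite gt_eqF.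
by rewrite ler_wpM2l ?eps_gap_ge // divr_ge0 ?mulr_ge0 // ltW.
Qed.

Lemma trial_fail_le_half :
  trial_exp sel Bt set0 (fun X => if thr <= minover Ct (fun c => ft c X) then 0 else 1) <= 1 / 2.
Proof.
apply: (le_trans (trial_exp_fail_le sel_simplex ft thr Bt set0 Ct_neq0 mu_ge0)).
apply: (@le_trans _ _ (\sum_(c in Ct) expR (- (6 * lnk)))).
  by apply: ler_sum => c; exact: trial_fail_color_le.
rewrite sumr_const -[expR _ *+ _]mulr_natl; apply: (le_trans _ (@natr_expRN_ln_le R _ k_ge2)).
by rewrite ler_wpM2r ?expR_ge0 // ler_nat -cardsT subset_leq_card ?subsetT.
Qed.

End NonemptyCt.
End MainArgument.

Unset Implicit Arguments.

Theorem theorem2 (R : realType) (V C : finType) (f : C -> {set V} -> R)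
  (B B' : nat) (eps delta : R) :
  (0 < #|V|)%N ->
  (forall c, nonneg_fun (f c)) ->
  (forall c, monotone_fun (f c)) ->
  (forall c, submodular_fun (f c)) ->
  (2 <= #|C|)%N ->
  0 < eps < 1 ->
  0 < delta < 1 ->
  (108 * #|C|%:R / eps ^+ 3 * ln (#|C|%:R : R) <= B%:R) ->
  B'%:R = 1 / (eps ^+ 2 / (36 * ln (#|C|%:R : R))) ->
  forall T : {set V}, preprocess_output f B' T ->
  let Ct := [set c | f c T < OPT f B] in
  let ft := fun c (A : {set V}) => f c (A :|: T) in
  let Bt := (B - #|T|)%N in
  let good := fun St : {set V} =>
    (minover [set: C] (fun c => f c (T :|: St)) >= (1 - 1 / expR 1 - eps) * OPT f B)
    && (#|T :|: St| <= B)%N in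
  (Ct = finset.set0 -> good finset.set0) /\
  (Ct != finset.set0 -> forall sel : {set V} -> V -> R,
    (forall S, LP_optimal ft Ct Bt S (sel S)) ->
    alg2_prob ft Ct Bt sel delta good >= 1 - delta).
Proof.
move=> _ f_ge0 f_mono f_submod k_ge2 eps01 delta01 B_ge B'_def T T_pre Ct ft Bt good.
split=> [Ct0|Ct0 sel sel_opt].
  exact (good_set0 f_ge0 f_mono f_submod k_ge2 eps01 B_ge B'_def T_pre Ct0).
refine (alg2_prob_ge _ (good_threshold f_ge0 f_mono f_submod k_ge2 eps01 B_ge B'_def T_pre Ct0)
  (trial_fail_le_half f_ge0 f_mono f_submod k_ge2 eps01 B_ge B'_def T_pre Ct0 sel_opt) delta01).
by move=> S; case: (sel_opt S).
Qed.
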